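(* Let $\mu$ be a probability measure on $\mathbb{R}^p$ supported on a compact set $S$ such that $\mathrm{diam}(\mathrm{conv}(S))>0$. Then for every positive integer $d$ and every $\mathbf{x}\in\mathbb{R}^p$, \[\Lambda_{\mu,d}(\mathbf{x})\le\left(\frac{\mathrm{diam}(\mathrm{conv}(S))}{\mathrm{dist}(\mathbf{x},\mathrm{conv}(S))+\mathrm{diam}(\mathrm{conv}(S))}\right)^2.\]
   Context: $\mathrm{conv}(S)$ is the convex hull of $S$ and $\mathrm{diam}$ the diameter. For a finite Borel measure $\nu$ with finite moments, the Christoffel function is $\Lambda_{\nu,d}(\xi)=\min\{\int P^2\,d\nu: P\in\mathbb{R}[X]_d,\ P(\xi)=1\}$, where $\mathbb{R}[X]_d$ is the space of real polynomials in $p$ variables of total degree at most $d$. *)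

From HB Require Import structures.
From mathcomp Require Import all_boot all_order all_algebra.
From mathcomp Require Import all_classical all_reals all_analysis.
From mathcomp Require mpoly.

Set Implicit Arguments.
Unset Strict Implicit.
Unset Printing Implicit Defensive.

Import Order.TTheory GRing.Theory Num.Theory.
Import numFieldNormedType.Exports.
Local Open Scope classical_set_scope.
Local Open Scope ring_scope.

(* R^p is modelled as [p.-tuple R], which carries the product (= Borel)
   sigma-algebra of mathcomp-analysis.  For geometry (linear structure,
   topology) points are transported to row vectors ['rV[R]_p]. *)
Definition tvec {R : realType} {p : nat} (x : p.-tuple R) : 'rV[R]_p :=
  \row_(i < p) tnth x i.

Definition euc_norm {R : realType} {p : nat} (v : 'rV[R]_p) : R :=
  Num.sqrt (\sum_(i < p) v ord0 i ^+ 2).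

Definition conv_hull {R : realType} {p : nat} (A : set 'rV[R]_p) : set 'rV[R]_p :=
  [set x | exists (n : nat) (w : 'I_n -> R) (y : 'I_n -> 'rV[R]_p),
      (forall i, 0 <= w i) /\ \sum_(i < n) w i = 1 /\
      (forall i, A (y i)) /\ x = \sum_(i < n) w i *: y i].

Definition euc_diam {R : realType} {p : nat} (A : set 'rV[R]_p) : R :=
  sup [set euc_norm (x - y) | x in A & y in A].

Definition euc_dist {R : realType} {p : nat} (x : 'rV[R]_p) (A : set 'rV[R]_p) : R :=
  inf [set euc_norm (x - y) | y in A].

Definition peval {R : realType} {p : nat} (P : mpoly.mpoly p R) (x : p.-tuple R) : R :=
  mpoly.meval (fun i => tnth x i) P.

Definition deg_le {R : realType} {p : nat} (d : nat) (P : mpoly.mpoly p R) : bool :=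
  all (fun m => (mpoly.mdeg m <= d)%N) (mpoly.msupp P).

(* Christoffel function:
   Lambda_{mu,d}(xi) = min { \int P^2 dmu : P in R[X]_d, P(xi) = 1 }
   (taken as an infimum in the extended reals). *)
Definition christoffel {R : realType} {p : nat}
  (mu : {measure set (p.-tuple R) -> \bar R}) (d : nat) (xi : p.-tuple R) : \bar R :=
  ereal_inf [set (\int[mu]_x ((peval P x) ^+ 2)%:E)%E
            | P in [set P : mpoly.mpoly p R | deg_le d P /\ peval P xi = 1]].

(* Let C be the convex hull of S, D its diameter and delta the distance from x
   to C.  If delta = 0 the constant polynomial 1 does it.  Otherwise take z in C
   with r = |x - z| close to delta, a = x - z, and the affine polynomial
     L(y) = (<a, y - z> + r D) / (r^2 + r D),
   so that L(x) = 1.  On S, Cauchy-Schwarz gives L >= 0, while <a, y - z> is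
   almost nonpositive because z almost minimises the distance to the convex set
   C; hence 0 <= L <= D / (delta + D) + h on S.  As mu is a probability carried
   by S, the Christoffel function at x is at most the integral of L^2, and h -> 0.
   Working with almost nearest points avoids projections. *)

From HB Require Import structures.
From mathcomp Require Import all_boot all_order all_algebra.
From mathcomp Require Import all_classical all_reals all_analysis.
From mathcomp Require mpoly.
From mathcomp Require Import measurable_realfun ring lra.
Import (canonicals, coercions, hints) mpoly.

Import Order.TTheory GRing.Theory Num.Theory.
Import numFieldNormedType.Exports.
Local Open Scope classical_set_scope.
Local Open Scope ring_scope.

Section DotProduct.
Context {R : realType} {p : nat}.
Implicit Types (u v w : 'rV[R]_p).

Definition dot u v : R := \sum_(i < p) u ord0 i * v ord0 i.

Lemma dotZl (s : R) u v : dot (s *: u) v = s * dot u v.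
Proof. by rewrite /dot mulr_sumr; apply: eq_bigr => i _; rewrite !mxE mulrA. Qed.

Lemma dotBr u v w : dot u (v - w) = dot u v - dot u w.
Proof. by rewrite /dot -sumrB; apply: eq_bigr => i _; rewrite !mxE mulrBr. Qed.

Lemma dotvv_comb (s t : R) u v :
  dot (s *: u + t *: v) (s *: u + t *: v) =
  s ^+ 2 * dot u u + 2 * s * t * dot u v + t ^+ 2 * dot v v.
Proof.
by rewrite /dot !mulr_sumr -!big_split /=; apply: eq_bigr => i _; rewrite !mxE; ring.
Qed.

Lemma dotvv_ge0 u : 0 <= dot u u.
Proof. by apply: sumr_ge0 => i _; rewrite -expr2 sqr_ge0. Qed.

Lemma euc_norm_ge0 u : 0 <= euc_norm u.
Proof. exact: sqrtr_ge0. Qed.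

Lemma euc_norm_sqr u : euc_norm u ^+ 2 = dot u u.
Proof.
rewrite /euc_norm sqr_sqrtr; last by apply: sumr_ge0 => i _; exact: sqr_ge0.
by apply: eq_bigr => i _; rewrite expr2.
Qed.

Lemma euc_norm_eq0 u : euc_norm u = 0 -> u = 0.
Proof.
move=> /eqP; rewrite sqrtr_eq0 => u2_le0; apply/rowP => j; rewrite mxE.
have u2_eq0 : \sum_(i < p) u ord0 i ^+ 2 = 0.
  by apply/eqP; rewrite eq_le u2_le0 sumr_ge0 // => i _; exact: sqr_ge0.
by apply/eqP; rewrite -sqrf_eq0 (psumr_eq0P _ u2_eq0) // => i _; exact: sqr_ge0.
Qed.

Lemma dot_ge_neg_norm u v : - (euc_norm u * euc_norm v) <= dot u v.
Proof.
have [nu0|nu_neq0] := eqVneq (euc_norm u) 0.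
  by rewrite nu0 (euc_norm_eq0 _ nu0) mul0r oppr0 /dot big1 // => i _; rewrite mxE mul0r.
have [nv0|nv_neq0] := eqVneq (euc_norm v) 0.
  by rewrite nv0 (euc_norm_eq0 _ nv0) mulr0 oppr0 /dot big1 // => i _; rewrite mxE mulr0.
have nu_gt0 : 0 < euc_norm u by rewrite lt_def nu_neq0 euc_norm_ge0.
have nv_gt0 : 0 < euc_norm v by rewrite lt_def nv_neq0 euc_norm_ge0.
have := dotvv_ge0 (euc_norm v *: u + euc_norm u *: v).
rewrite dotvv_comb -!euc_norm_sqr => h.
have nuv_gt0 := mulr_gt0 nu_gt0 nv_gt0.
nra.
Qed.

End DotProduct.

Section ConvexHull.
Context {R : realType} {p : nat}.
Variable K : set 'rV[R]_p.

Lemma conv_hull_sub : K `<=` conv_hull K.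
Proof.
move=> y Ky; exists 1%N, (fun=> 1), (fun=> y).
by rewrite !big_ord1 scale1r.
Qed.

Lemma conv_hull_segment y z t :
  K y -> conv_hull K z -> 0 <= t <= 1 -> conv_hull K (z + t *: (y - z)).
Proof.
move=> Ky [n [w [yy [w_ge0 [w_sum1 [Kyy ->]]]]]] /andP[t_ge0 t_le1].
exists n.+1, (fun i => if unlift ord0 i is Some j then (1 - t) * w j else t),
  (fun i => if unlift ord0 i is Some j then yy j else y).
split; [|split; [|split]].
- by move=> i; case: (unlift _ _) => [j|] //; apply: mulr_ge0 => //; lra.
- rewrite big_ord_recl unlift_none.
  under eq_bigr do rewrite liftK.
  by rewrite -mulr_sumr w_sum1; ring.
- by move=> i; case: (unlift _ _).
- rewrite big_ord_recl unlift_none.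
  under [X in _ = _ + X]eq_bigr do rewrite liftK -scalerA.
  by rewrite -scaler_sumr scalerBr scalerBl scale1r addrCA.
Qed.

End ConvexHull.

Section DiameterDistance.
Context {R : realType} {p : nat}.
Implicit Types (A : set 'rV[R]_p) (x : 'rV[R]_p).

(* [sup] is [0] on sets without a supremum, so a positive diameter forces the
   set of distances to be nonempty and bounded. *)
Lemma euc_diam_gt0_has_sup {A} :
  0 < euc_diam A -> has_sup [set euc_norm (u - v) | u in A & v in A].
Proof.
by move=> D_gt0; apply: contrapT => /sup_out D0; move: D_gt0; rewrite /euc_diam D0 ltxx.
Qed.

Lemma euc_norm_le_diam {A u v} :
  0 < euc_diam A -> A u -> A v -> euc_norm (u - v) <= euc_diam A.
Proof.
move=> /euc_diam_gt0_has_sup supA Au Av; apply: (sup_upper_bound supA).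
by exists u => //; exists v.
Qed.

Lemma euc_diam_gt0_neq0 {A} : 0 < euc_diam A -> A !=set0.
Proof. by move=> /euc_diam_gt0_has_sup [[_ [u Au _]] _]; exists u. Qed.

Lemma has_inf_euc_dist x {A} : A !=set0 -> has_inf [set euc_norm (x - y) | y in A].
Proof.
move=> [y Ay]; split; first by exists (euc_norm (x - y)); exists y.
by exists 0 => _ [z _ <-]; exact: euc_norm_ge0.
Qed.

Lemma euc_dist_ge0 x A : 0 <= euc_dist x A.
Proof.
have [[y Ay]|A0] := pselect (A !=set0).
  apply: lb_le_inf; first by exists (euc_norm (x - y)); exists y.
  by move=> _ [z _ <-]; exact: euc_norm_ge0.
rewrite /euc_dist inf_out // => -[[_ [y Ay _]] _]; apply: A0; by exists y.
Qed.

Lemma euc_dist_le x {A z} : A z -> euc_dist x A <= euc_norm (x - z).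
Proof.
move=> Az; have /(has_inf_euc_dist x) [_ lbE] : A !=set0 by exists z.
by apply: (ge_inf lbE); exists z.
Qed.

Lemma euc_dist_approx x {A e} :
  A !=set0 -> 0 < e -> exists2 z, A z & euc_norm (x - z) < euc_dist x A + e.
Proof.
move=> A_neq0 e_gt0.
by have [_ [z Az <-]] := inf_adherent e_gt0 (has_inf_euc_dist x A_neq0); exists z.
Qed.

End DiameterDistance.

Section RealBounds.
Context {R : realType}.

Lemma exists_sqr_addr_le {q e : R} :
  0 <= q -> 0 < e -> exists2 h, 0 < h & (q + h) ^+ 2 <= q ^+ 2 + e.
Proof.
move=> q_ge0 e_gt0; pose h := Num.min 1 (e / (2 * q + 1)).
have h_gt0 : 0 < h by rewrite lt_min ltr01 divr_gt0 //; lra.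
have h_le1 : h <= 1 by rewrite ge_min lexx.
have h_small : h * (2 * q + 1) <= e.
  by rewrite -ler_pdivlMr; [rewrite ge_min lexx orbT | lra].
exists h => //; have : h * h <= h * 1 by rewrite ler_wpM2l // ltW.
nra.
Qed.

Lemma le_sqr_limit (c : \bar R) (q : R) : 0 <= q ->
  (forall h : R, 0 < h -> (c <= ((q + h) ^+ 2)%:E)%E) -> (c <= (q ^+ 2)%:E)%E.
Proof.
move=> q_ge0 c_le; apply/lee_addgt0Pr => e e_gt0.
have [h h_gt0 qh_le] := exists_sqr_addr_le q_ge0 e_gt0.
by apply: le_trans (c_le h h_gt0) _; rewrite -EFinD lee_fin.
Qed.

Lemma ratio_le_diam_bound (delta r D s h : R) :
  0 < delta -> delta <= r -> 0 < D -> 0 <= h ->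
  - (r * D) <= s -> s <= h * delta ^+ 2 ->
  `|(s + r * D) / (r ^+ 2 + r * D)| <= D / (delta + D) + h.
Proof.
move=> delta_gt0 delta_le_r D_gt0 h_ge0 s_ge s_le.
have r_gt0 : 0 < r := lt_le_trans delta_gt0 delta_le_r.
have M_gt0 : 0 < r ^+ 2 + r * D by rewrite addr_gt0 ?mulr_gt0 ?exprn_gt0.
rewrite ger0_norm; last by apply: divr_ge0; [lra | exact: ltW].
rewrite ler_pdivrMr //.
set q := D / (delta + D).
have q_delta : q * (delta + D) = D by rewrite /q mulfVK // gt_eqF // addr_gt0.
have q_ge0 : 0 <= q by rewrite divr_ge0 // ltW // addr_gt0.
have rD_le : r * D <= q * (r ^+ 2 + r * D).
  have -> : q * (r ^+ 2 + r * D) = r * (q * (r + D)) by ring.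
  by apply: ler_wpM2l; [exact: ltW | nra].
have h_le : h * delta ^+ 2 <= h * (r ^+ 2 + r * D).
  by rewrite ler_wpM2l //; nra.
lra.
Qed.

End RealBounds.

Section AlmostNearestPoint.
Context {R : realType} {p : nat}.
Context {K C : set 'rV[R]_p} {D : R}.
Hypothesis segment_in : forall y z t, K y -> C z -> 0 <= t <= 1 -> C (z + t *: (y - z)).
Hypothesis diam_le : forall y z, K y -> C z -> euc_norm (y - z) <= D.
Hypothesis C_neq0 : C !=set0.

(* If z is an almost nearest point, moving from z a small step t towards any y
   cannot bring x closer than [euc_dist x C], which bounds <x - z, y - z>. *)
Lemma almost_nearest_point x eta : 0 < eta ->
  exists2 z, C z & forall y, K y -> dot (x - z) (y - z) <= eta.
Proof.
move=> eta_gt0; set delta := euc_dist x C.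
pose t := Num.min 1 (eta / (D ^+ 2 + 1)).
have t_gt0 : 0 < t by rewrite lt_min ltr01 divr_gt0 // ltr_pwDr // sqr_ge0.
have t_le1 : t <= 1 by rewrite ge_min lexx.
have tD_le : t * D ^+ 2 <= eta.
  have : t * (D ^+ 2 + 1) <= eta.
    by rewrite -ler_pdivlMr ?ltr_pwDr ?sqr_ge0 // ge_min lexx orbT.
  lra.
have [h h_gt0 deltah_le] := exists_sqr_addr_le (euc_dist_ge0 x C) (mulr_gt0 t_gt0 eta_gt0).
have [z Cz xz_lt] := euc_dist_approx x C_neq0 h_gt0.
exists z => // y Ky; set a := x - z; set b := y - z.
have aa_le : dot a a <= delta ^+ 2 + t * eta.
  rewrite -euc_norm_sqr; apply: le_trans deltah_le.
  by rewrite ler_pXn2r ?nnegrE ?addr_ge0 ?euc_norm_ge0 ?euc_dist_ge0 ?ltW.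
have bb_le : t * dot b b <= t * D ^+ 2.
  have b_le := diam_le _ _ Ky Cz; apply: ler_wpM2l; first exact: ltW.
  by rewrite -euc_norm_sqr ler_pXn2r ?nnegrE ?euc_norm_ge0 // (le_trans (euc_norm_ge0 b)).
have : delta ^+ 2 <= dot (1 *: a + (- t) *: b) (1 *: a + (- t) *: b).
  have Cw := segment_in _ _ _ Ky Cz (introT andP (conj (ltW t_gt0) t_le1)).
  rewrite -euc_norm_sqr ler_pXn2r ?nnegrE ?euc_dist_ge0 ?euc_norm_ge0 //.
  have -> : 1 *: a + (- t) *: b = x - (z + t *: (y - z)).
    by rewrite scale1r scaleNr /a /b opprD addrA.
  exact: euc_dist_le.
rewrite dotvv_comb expr1n mul1r (sqrrN t) => delta_le.
have : t * (2 * dot a b) <= t * (2 * eta).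
  have : t * (t * dot b b) <= t * eta.
    by apply: ler_wpM2l; [exact: ltW | exact: le_trans bb_le tD_le].
  nra.
by rewrite ler_pM2l // ler_pM2l.
Qed.

End AlmostNearestPoint.

Section Polynomials.
Context {R : realType} {p : nat}.

Lemma measurable_peval (P : mpoly.mpoly p R) : measurable_fun setT (peval P).
Proof.
rewrite /peval; under eq_fun do rewrite mpoly.mevalE.
apply: measurable_sum => m; apply: measurable_funM; first exact: measurable_cst.
by apply: measurable_prod => i _; apply: measurable_funX; exact: measurable_tnth.
Qed.

Definition affine_mpoly (a : 'rV[R]_p) (c : R) : mpoly.mpoly p R :=
  mpoly.mpolyC p c + \sum_i a ord0 i *: mpoly.mpolyX R (mpoly.mnm1 i).

Lemma deg_le_affine_mpoly a c d : (0 < d)%N -> deg_le d (affine_mpoly a c).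
Proof.
move=> d_gt0; apply/allP => m /mpoly.msize_mdeg_lt m_lt.
rewrite -ltnS (leq_trans m_lt) // (leq_trans (mpoly.msizeD_le _ _)) //.
rewrite geq_max mpoly.msizeC (leq_trans (leq_b1 _)) //=.
apply: leq_trans (mpoly.msize_sum _ _ _) _; apply/bigmax_leqP => i _.
by rewrite (leq_trans (mpoly.msizeZ_le _ _)) // mpoly.msizeX mpoly.mdeg1.
Qed.

Lemma peval_affine_mpoly a c xi : peval (affine_mpoly a c) xi = dot a (tvec xi) + c.
Proof.
rewrite /peval mpoly.mevalD mpoly.mevalC addrC.
rewrite (big_morph _ (mpoly.mevalD _) (mpoly.meval0 _)).
by congr (_ + _); apply: eq_bigr => i _; rewrite mpoly.mevalZ mpoly.mevalXU mxE.
Qed.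

End Polynomials.

Section ProbabilityIntegral.
Context {d : measure_display} {T : measurableType d} {R : realType}.
Variable mu : probability T R.

Lemma integral_sqr_le_ae (S : set T) (f : T -> R) (B : R) :
  measurable S -> mu (~` S) = 0%E -> measurable_fun setT f ->
  (forall y, S y -> f y ^+ 2 <= B) -> (\int[mu]_x (f x ^+ 2)%:E <= B%:E)%E.
Proof.
move=> mS muS0 mf f_le.
have [y Sy] : S !=set0.
  apply/set0P/negP => /eqP S0; move: muS0.
  by rewrite S0 setC0 probability_setT => /eqP; rewrite onee_eq0.
have B_ge0 : 0 <= B by apply: le_trans (f_le y Sy); exact: sqr_ge0.
apply: (@le_trans _ _ (\int[mu]_x (cst B%:E) x)%E).
  apply: ae_ge0_le_integral => //.
  - by move=> x _; rewrite lee_fin sqr_ge0.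
  - by apply/measurable_EFinP; exact: measurable_funX.
  - exists (~` S); split => //; first exact: measurableC.
    by move=> x /= nx Sx; apply: nx => _; rewrite lee_fin f_le.
rewrite integral_cst //.
suff -> : (B%:E * mu setT)%E = B%:E by [].
by rewrite -[RHS]mule1; congr (_ * _)%E; exact: probability_setT.
Qed.

End ProbabilityIntegral.

Section ChristoffelBounds.
Context {R : realType} {p : nat} (mu : probability (p.-tuple R) R).

Lemma christoffel_le (S : set (p.-tuple R)) d xi (P : mpoly.mpoly p R) (B : R) :
  measurable S -> mu (~` S) = 0%E -> deg_le d P -> peval P xi = 1 ->
  (forall y, S y -> `|peval P y| <= B) -> (christoffel mu d xi <= (B ^+ 2)%:E)%E.
Proof.
move=> mS muS0 degP Pxi P_le.
apply: le_trans (ereal_inf_lbound _) _; first by exists P.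
apply: (integral_sqr_le_ae mu S (peval P) _ mS muS0 (measurable_peval P)) => y Sy.
have B_ge0 := le_trans (normr_ge0 _) (P_le y Sy).
by rewrite -real_normK ?num_real // ler_pXn2r ?nnegrE // P_le.
Qed.

Lemma christoffel_le1 d xi : (christoffel mu d xi <= 1)%E.
Proof.
have := christoffel_le setT d xi 1 1; rewrite expr1n; apply => //.
- by rewrite setCT measure0.
- by rewrite /deg_le mpoly.msupp1 /= mpoly.mdeg0.
- by rewrite /peval mpoly.meval1.
- by move=> y _; rewrite /peval mpoly.meval1 normr1.
Qed.

End ChristoffelBounds.

Theorem lemma6p8 (R : realType) (p : nat)
    (mu : probability (p.-tuple R) R) (S : set (p.-tuple R)) :
  measurable S ->
  mu (~` S) = 0%E ->
  compact (tvec @` S) ->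
  0 < euc_diam (conv_hull (tvec @` S)) ->
  forall (d : nat), (0 < d)%N ->
  forall x : p.-tuple R,
    (christoffel mu d x <=
      ((euc_diam (conv_hull (tvec @` S)) /
        (euc_dist (tvec x) (conv_hull (tvec @` S)) + euc_diam (conv_hull (tvec @` S)))) ^+ 2)%:E)%E.
Proof.
move=> mS muS0 _ D_gt0 d d_gt0 x.
set K := tvec @` S; set C := conv_hull K; set D := euc_diam C.
set delta := euc_dist (tvec x) C.
have [delta0|delta_neq0] := eqVneq delta 0.
  by rewrite delta0 add0r divff ?gt_eqF // expr1n; exact: christoffel_le1.
have delta_gt0 : 0 < delta by rewrite lt_def delta_neq0 euc_dist_ge0.
have diam_KC y z : K y -> C z -> euc_norm (y - z) <= D.
  by move=> Ky Cz; apply: euc_norm_le_diam => //; exact: conv_hull_sub.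
apply: le_sqr_limit => [|h h_gt0]; first by rewrite divr_ge0 ?addr_ge0 ?ltW.
have [z Cz z_near] := almost_nearest_point (conv_hull_segment K) diam_KC
  (euc_diam_gt0_neq0 D_gt0) (tvec x) _ (mulr_gt0 h_gt0 (exprn_gt0 2 delta_gt0)).
set a := tvec x - z; set r := euc_norm a; set M := r ^+ 2 + r * D.
have delta_le_r : delta <= r := euc_dist_le _ Cz.
have M_gt0 : 0 < M by rewrite addr_gt0 ?mulr_gt0 ?exprn_gt0 // (lt_le_trans delta_gt0).
pose L := affine_mpoly (M^-1 *: a) ((r * D - dot a z) / M).
have L_eq y : peval L y = (dot a (tvec y - z) + r * D) / M.
  by rewrite peval_affine_mpoly dotZl dotBr; field; rewrite gt_eqF.
apply: (christoffel_le mu S d x L) => //; first exact: deg_le_affine_mpoly.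
  by rewrite L_eq -/a -euc_norm_sqr -/r -/M divff ?gt_eqF.
move=> y Sy; rewrite L_eq.
have Ky : K (tvec y) by exists y.
apply: ratio_le_diam_bound => //; [exact: ltW | | exact: z_near].
apply: le_trans (dot_ge_neg_norm _ _); rewrite lerN2.
by apply: ler_wpM2l; [exact: euc_norm_ge0 | exact: diam_KC].
Qed.
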